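(* Let $L$ be a localization functor in the category of groups. Assume that for every group $G$ and every group extension $1\to K\to E\to LG\to 1$ in which $K$ and $E$ are $L$-local, the extension $1\to K\to E\times_{LG}G\to G\to 1$ obtained by pulling back along the localization homomorphism $\eta_G\colon G\to LG$ is $L$-flat. Then $L$ is conditionally flat.
   Context: For a group homomorphism $\varphi\colon A\to B$, a group $H$ is $\varphi$-local if $\varphi^*\colon \mathrm{Hom}(B,H)\to\mathrm{Hom}(A,H)$ is a bijection; the localization functor $L=L_\varphi$ assigns to each group $G$ a $\varphi$-local group $LG$ with a natural homomorphism $\eta_G\colon G\to LG$ that is initial among homomorphisms from $G$ to $\varphi$-local groups. A localization functor in groups is one of the form $L_\varphi$; ''$L$-local'' means $\varphi$-local. A group extension $1\to N\to E\to Q\to 1$ is $L$-flat if $1\to LN\to LE\to LQ\to 1$ (with the induced maps) is again a short exact sequence. An extension is fully $L$-flat if its pullback along every homomorphism $Q'\to Q$ is $L$-flat; $L$ is conditionally flat if every $L$-flat extension is fully $L$-flat. *)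

From Stdlib Require Import ProofIrrelevance.

Set Implicit Arguments.

Record Group := MkGroup {
  carrier :> Type;
  gmul : carrier -> carrier -> carrier;
  gone : carrier;
  ginv : carrier -> carrier;
  gmulA : forall x y z, gmul x (gmul y z) = gmul (gmul x y) z;
  gmul1l : forall x, gmul gone x = x;
  gmul1r : forall x, gmul x gone = x;
  gmulVl : forall x, gmul (ginv x) x = gone;
  gmulVr : forall x, gmul x (ginv x) = gone
}.
Arguments gmul {g}.
Arguments gone {g}.
Arguments ginv {g}.

Record Hom (G H : Group) := MkHom {
  hfun :> G -> H;
  hmul : forall x y, hfun (gmul x y) = gmul (hfun x) (hfun y)
}.

Lemma hom_one (G H : Group) (f : Hom G H) : f gone = gone.
Proof.
  assert (E : gmul (f gone) (f gone) = gmul (f gone) gone).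
  { rewrite <- hmul, gmul1l, gmul1r. reflexivity. }
  assert (E2 := f_equal (gmul (ginv (f gone))) E).
  rewrite !gmulA, gmulVl, !gmul1l in E2. exact E2.
Qed.

Definition hcomp (G H K : Group) (g : Hom H K) (f : Hom G H) : Hom G K.
Proof.
  refine (@MkHom G K (fun x => g (f x)) _).
  intros x y; rewrite !hmul; reflexivity.
Defined.

(* H is phi-local iff phi^* : Hom(B,H) -> Hom(A,H), g |-> g o phi, is a
   bijection (homomorphisms being identified with their underlying maps). *)
Definition is_local (A B : Group) (phi : Hom A B) (H : Group) : Prop :=
  (forall f : Hom A H, exists g : Hom B H, forall a, g (phi a) = f a) /\
  (forall g1 g2 : Hom B H, (forall a, g1 (phi a) = g2 (phi a)) ->
                            forall b, g1 b = g2 b).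

Record Localization (A B : Group) (phi : Hom A B) := MkLocalization {
  LG : Group -> Group;
  eta : forall G : Group, Hom G (LG G);
  LG_local : forall G, is_local phi (LG G);
  LG_univ : forall (G H : Group), is_local phi H -> forall f : Hom G H,
      exists g : Hom (LG G) H,
        (forall x, g (eta G x) = f x) /\
        (forall g' : Hom (LG G) H, (forall x, g' (eta G x) = f x) ->
                                   forall y, g' y = g y)
}.

Record ses (N E Q : Group) (i : Hom N E) (p : Hom E Q) : Prop := MkSes {
  ses_inj : forall n1 n2, i n1 = i n2 -> n1 = n2;
  ses_surj : forall q, exists e, p e = q;
  ses_exact : forall e, p e = gone <-> exists n, i n = e
}.

(* L-flatness: 1 -> LN -> LE -> LQ -> 1, with the induced maps
   (the unique homomorphisms compatible with eta), is short exact. *)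
Definition L_flat (A B : Group) (phi : Hom A B) (L : Localization phi)
    (N E Q : Group) (i : Hom N E) (p : Hom E Q) : Prop :=
  forall (Li : Hom (LG L N) (LG L E)) (Lp : Hom (LG L E) (LG L Q)),
    (forall n, Li (eta L N n) = eta L E (i n)) ->
    (forall e, Lp (eta L E e) = eta L Q (p e)) ->
    ses Li Lp.

Section Pullback.
Variables (E Q Q' : Group) (p : Hom E Q) (h : Hom Q' Q).

Definition pb_car := { x : E * Q' | p (fst x) = h (snd x) }.

Lemma pb_eq (x y : pb_car) : proj1_sig x = proj1_sig y -> x = y.
Proof.
  destruct x as [x hx], y as [y hy]; simpl; intros ->.
  f_equal; apply proof_irrelevance.
Qed.

Definition pb_mul (x y : pb_car) : pb_car.
Proof.
  refine (exist _ (gmul (fst (proj1_sig x)) (fst (proj1_sig y)),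
                   gmul (snd (proj1_sig x)) (snd (proj1_sig y))) _).
  simpl; rewrite !hmul, (proj2_sig x), (proj2_sig y); reflexivity.
Defined.

Definition pb_one : pb_car.
Proof.
  refine (exist _ (gone, gone) _); simpl; rewrite !hom_one; reflexivity.
Defined.

Lemma hom_inv (G H : Group) (f : Hom G H) x : f (ginv x) = ginv (f x).
Proof.
  assert (E1 : gmul (f (ginv x)) (f x) = gmul (ginv (f x)) (f x)).
  { rewrite <- hmul, gmulVl, gmulVl; apply hom_one. }
  assert (E2 := f_equal (fun z => gmul z (ginv (f x))) E1); simpl in E2.
  rewrite <- !gmulA, gmulVr, !gmul1r in E2; exact E2.
Qed.

Definition pb_inv (x : pb_car) : pb_car.
Proof.
  refine (exist _ (ginv (fst (proj1_sig x)), ginv (snd (proj1_sig x))) _).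
  simpl; rewrite !hom_inv, (proj2_sig x); reflexivity.
Defined.

Definition pullback : Group.
Proof.
  refine (@MkGroup pb_car pb_mul pb_one pb_inv _ _ _ _ _);
  intros; apply pb_eq; simpl;
  rewrite ?gmulA, ?gmul1l, ?gmul1r, ?gmulVl, ?gmulVr; try reflexivity;
  destruct (proj1_sig _); reflexivity.
Defined.

Definition pb_proj : Hom pullback Q'.
Proof.
  refine (@MkHom pullback Q' (fun x => snd (proj1_sig x)) _).
  intros; reflexivity.
Defined.

Variables (N : Group) (i : Hom N E).

Definition pb_in (H : ses i p) : Hom N pullback.
Proof.
  assert (P : forall n, p (fst (i n, @gone Q')) = h (snd (i n, @gone Q'))).
  { intro n; simpl; rewrite (hom_one h); apply (proj2 (ses_exact H (i n))); eauto. }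
  refine (@MkHom N pullback (fun n => exist _ (i n, gone) (P n)) _).
  intros; apply pb_eq; simpl; rewrite hmul, gmul1l; reflexivity.
Defined.
End Pullback.

Definition fully_L_flat (A B : Group) (phi : Hom A B) (L : Localization phi)
    (N E Q : Group) (i : Hom N E) (p : Hom E Q) (H : ses i p) : Prop :=
  forall (Q' : Group) (h : Hom Q' Q),
    L_flat L (pb_in h H) (pb_proj p h).

Definition conditionally_flat (A B : Group) (phi : Hom A B)
    (L : Localization phi) : Prop :=
  forall (N E Q : Group) (i : Hom N E) (p : Hom E Q) (H : ses i p),
    L_flat L i p -> fully_L_flat L H.

(* Let 1 -> N -> E -> Q -> 1 be an L-flat extension and h : Q' -> Q; we must
   show that its pullback 1 -> N -> P -> Q' -> 1, P = E x_Q Q', is L-flat.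
   Localizing gives a short exact sequence 1 -> LN -> LE -> LQ -> 1; pulling
   it back along Lh yields an extension of LQ' with local kernel LN and local
   middle LE x_LQ LQ', and pulling that back along eta_Q' gives, by the
   hypothesis, an L-flat extension 1 -> LN -> P' -> Q' -> 1.  A natural
   comparison map Phi : P -> P' lies over the identity of Q' and over
   eta_N : N -> LN.  The heart of the proof is that Phi is an L-equivalence
   (every map P -> T to a local group extends uniquely along Phi): P' is
   generated by the normal subgroup LN together with Phi(P), and
   Phi^-1(LN) = N.  Since eta_N is an L-equivalence as well, L(Phi) and
   L(eta_N) are isomorphisms, and L-flatness transfers from the extension
   through P' to the extension through P. *)
From Stdlib Require Import ClassicalEpsilon.

Section GroupIdentities.
Context {G : Group}.

Lemma mulKl (x y : G) : gmul (ginv x) (gmul x y) = y.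
Proof. rewrite gmulA, gmulVl, gmul1l; reflexivity. Qed.

Lemma mulKr (x y : G) : gmul x (gmul (ginv x) y) = y.
Proof. rewrite gmulA, gmulVr, gmul1l; reflexivity. Qed.

Lemma mulKr' (x y : G) : gmul (gmul y (ginv x)) x = y.
Proof. rewrite <- gmulA, gmulVl, gmul1r; reflexivity. Qed.

Lemma mulKl' (x y : G) : gmul (gmul y x) (ginv x) = y.
Proof. rewrite <- gmulA, gmulVr, gmul1r; reflexivity. Qed.

Lemma mul_cancel_l (a x y : G) : gmul a x = gmul a y -> x = y.
Proof. intro E. rewrite <- (mulKl a x), E, mulKl. reflexivity. Qed.

Lemma mul_cancel_r (a x y : G) : gmul x a = gmul y a -> x = y.
Proof. intro E. rewrite <- (mulKl' a x), E, mulKl'. reflexivity. Qed.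

Lemma conj_mul (a x y : G) :
  gmul (gmul (gmul a x) (ginv a)) (gmul (gmul a y) (ginv a))
  = gmul (gmul a (gmul x y)) (ginv a).
Proof. rewrite <- !gmulA, mulKl. reflexivity. Qed.

End GroupIdentities.

Ltac rassoc := repeat rewrite <- gmulA.

Definition idh (G : Group) : Hom G G :=
  MkHom _ _ (fun x => x) (fun _ _ => eq_refl).

Definition conj_hom {G : Group} (a : G) : Hom G G :=
  MkHom _ _ (fun x => gmul (gmul a x) (ginv a))
        (fun x y => eq_sym (conj_mul a x y)).

Lemma ses_normal {N E Q : Group} {i : Hom N E} {p : Hom E Q} :
  ses i p -> forall z n, exists n', gmul (gmul z (i n)) (ginv z) = i n'.
Proof.
  intros H z n.
  assert (Hn : p (i n) = gone) by (apply (ses_exact H); eauto).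
  assert (Hc : p (gmul (gmul z (i n)) (ginv z)) = gone)
    by (rewrite !hmul, hom_inv, Hn, gmul1r, gmulVr; reflexivity).
  destruct (proj1 (ses_exact H _) Hc) as [n' Hn']. eauto.
Qed.

Lemma ses_transfer {N P Q M P' : Group} (j : Hom N P) (q : Hom P Q)
    (k : Hom M P') (q' : Hom P' Q) (a : Hom N M) (b : Hom P P')
    (a' : M -> N) (b' : P' -> P) :
  (forall x, a' (a x) = x) -> (forall y, a (a' y) = y) ->
  (forall x, b' (b x) = x) -> (forall y, b (b' y) = y) ->
  (forall n, b (j n) = k (a n)) -> (forall x, q' (b x) = q x) ->
  ses k q' -> ses j q.
Proof.
  intros aK Ka bK Kb square over Hs. constructor.
  - intros n1 n2 E. rewrite <- (aK n1), <- (aK n2). f_equal.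
    apply (ses_inj Hs). rewrite <- !square, E. reflexivity.
  - intro y. destruct (ses_surj Hs y) as [z Hz].
    exists (b' z). rewrite <- over, Kb. exact Hz.
  - intro x. rewrite <- over. split.
    + intro Hx. destruct (proj1 (ses_exact Hs _) Hx) as [m Hm].
      exists (a' m). rewrite <- (bK (j _)), <- (bK x), square, Ka, Hm.
      reflexivity.
    + intros [n <-]. rewrite square. apply (ses_exact Hs). eauto.
Qed.

Section PullbackFacts.
Variables (E Q Q' : Group) (p : Hom E Q) (h : Hom Q' Q).

Definition pb_fst : Hom (pullback p h) E :=
  MkHom (pullback p h) E (fun x => fst (proj1_sig x)) (fun _ _ => eq_refl).

Lemma pb_ext (x y : pullback p h) :
  pb_fst x = pb_fst y -> pb_proj p h x = pb_proj p h y -> x = y.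
Proof.
  destruct x as [[e1 q1] H1], y as [[e2 q2] H2]; simpl.
  intros -> ->. apply pb_eq. reflexivity.
Qed.

Definition pb_pair {X : Group} (f1 : Hom X E) (f2 : Hom X Q')
    (Hc : forall x, p (f1 x) = h (f2 x)) : Hom X (pullback p h).
Proof.
  refine (MkHom X (pullback p h)
            (fun x => exist _ (f1 x, f2 x) (Hc x)) _).
  intros x y. apply pb_ext; apply hmul.
Defined.

Lemma pb_local (A B : Group) (phi : Hom A B) :
  is_local phi E -> is_local phi Q' -> is_local phi Q ->
  is_local phi (pullback p h).
Proof.
  intros [E_ext E_uniq] [Q'_ext Q'_uniq] [_ Q_uniq]. split.
  - intro f.
    destruct (E_ext (hcomp pb_fst f)) as [g1 Hg1].
    destruct (Q'_ext (hcomp (pb_proj p h) f)) as [g2 Hg2].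
    assert (Hc : forall b, p (g1 b) = h (g2 b)).
    { apply (Q_uniq (hcomp p g1) (hcomp h g2)). intro a; simpl.
      rewrite Hg1, Hg2. exact (proj2_sig (f a)). }
    exists (pb_pair g1 g2 Hc). intro a. apply pb_ext; [apply Hg1 | apply Hg2].
  - intros g1 g2 Hg b. apply pb_ext.
    + exact (E_uniq (hcomp pb_fst g1) (hcomp pb_fst g2)
               (fun a => f_equal pb_fst (Hg a)) b).
    + exact (Q'_uniq (hcomp (pb_proj p h) g1) (hcomp (pb_proj p h) g2)
               (fun a => f_equal (pb_proj p h) (Hg a)) b).
Qed.

Variables (N : Group) (i : Hom N E).

Lemma pb_ses (H : ses i p) : ses (pb_in h H) (pb_proj p h).
Proof.
  constructor.
  - intros n1 n2 Hn. apply (ses_inj H). exact (f_equal pb_fst Hn).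
  - intro q. destruct (ses_surj H (h q)) as [e He].
    exists (exist _ (e, q) He). reflexivity.
  - intros [[e q] He]; simpl; split.
    + intros ->. assert (He' : p e = gone)
        by (simpl in He; rewrite He; apply hom_one).
      destruct (proj1 (ses_exact H e) He') as [n Hn]. exists n.
      apply pb_ext; [exact Hn | reflexivity].
    + intros [n Hn]. symmetry. exact (f_equal (pb_proj p h) Hn).
Qed.

End PullbackFacts.

Arguments pb_fst {E Q Q'} p h.
Arguments pb_ext {E Q Q'} p h x y.
Arguments pb_pair {E Q Q'} p h {X} f1 f2 Hc.
Arguments pb_local {E Q Q'} p h {A B} phi.
Arguments pb_ses {E Q Q' p} h {N i} H.

Definition L_equiv {A B : Group} (phi : Hom A B) {G G' : Group}
    (f : Hom G G') : Prop :=
  forall T, is_local phi T ->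
    (forall g : Hom G T, exists g' : Hom G' T, forall x, g' (f x) = g x) /\
    (forall g1 g2 : Hom G' T, (forall x, g1 (f x) = g2 (f x)) ->
                              forall y, g1 y = g2 y).

Section LocalizationFacts.
Variables (A B : Group) (phi : Hom A B) (L : Localization phi).

Lemma L_extend {G T : Group} (HT : is_local phi T) (f : Hom G T) :
  exists g : Hom (LG L G) T, forall x, g (eta L G x) = f x.
Proof. destruct (LG_univ L HT f) as [g [Hg _]]; eauto. Qed.

Lemma L_uniq {G T : Group} (HT : is_local phi T) (g1 g2 : Hom (LG L G) T) :
  (forall x, g1 (eta L G x) = g2 (eta L G x)) -> forall y, g1 y = g2 y.
Proof.
  intros Hx y.
  destruct (LG_univ L HT (hcomp g1 (eta L G))) as [g [_ Hu]].
  rewrite (Hu g1), (Hu g2); try reflexivity; intro x; simpl; auto.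
Qed.

Lemma L_map {G G' : Group} (f : Hom G G') :
  exists Lf : Hom (LG L G) (LG L G'),
    forall x, Lf (eta L G x) = eta L G' (f x).
Proof. exact (L_extend (LG_local L G') (hcomp (eta L G') f)). Qed.

Lemma eta_L_equiv (G : Group) : L_equiv phi (eta L G).
Proof.
  intros T HT. split.
  - exact (L_extend HT).
  - exact (L_uniq HT).
Qed.

Lemma L_equiv_inverse {G G' : Group} {f : Hom G G'}
    {Lf : Hom (LG L G) (LG L G')} :
  L_equiv phi f -> (forall x, Lf (eta L G x) = eta L G' (f x)) ->
  exists Psi : Hom (LG L G') (LG L G),
    (forall x, Psi (Lf x) = x) /\ (forall y, Lf (Psi y) = y).
Proof.
  intros Hf HLf.
  destruct (proj1 (Hf _ (LG_local L G)) (eta L G)) as [g Hg].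
  destruct (L_extend (LG_local L G) g) as [Psi HPsi].
  assert (Lf_g : forall y, Lf (g y) = eta L G' y).
  { apply (proj2 (Hf _ (LG_local L G')) (hcomp Lf g) (eta L G')).
    intro x; simpl. rewrite Hg. apply HLf. }
  exists Psi. split.
  - intro x. apply (L_uniq (LG_local L G) (hcomp Psi Lf) (idh _)).
    intro y; simpl. rewrite HLf, HPsi. apply Hg.
  - intro y. apply (L_uniq (LG_local L G') (hcomp Lf Psi) (idh _)).
    intro z; simpl. rewrite HPsi. apply Lf_g.
Qed.

Lemma flat_transfer {N P Q M P' : Group} {j : Hom N P} {q : Hom P Q}
    (k : Hom M P') (q' : Hom P' Q) (e : Hom N M) (Phi : Hom P P') :
  (forall n, Phi (j n) = k (e n)) -> (forall x, q' (Phi x) = q x) ->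
  L_equiv phi e -> L_equiv phi Phi ->
  L_flat L k q' -> L_flat L j q.
Proof.
  intros square over He HPhi Hflat Lj Lq HLj HLq.
  destruct (L_map k) as [Lk HLk]. destruct (L_map q') as [Lq' HLq'].
  destruct (L_map e) as [Le HLe]. destruct (L_map Phi) as [LPhi HLPhi].
  destruct (L_equiv_inverse He HLe) as [Le' [Le'K LeK]].
  destruct (L_equiv_inverse HPhi HLPhi) as [LPhi' [LPhi'K LPhiK]].
  apply (ses_transfer Lj Lq Lk Lq' Le LPhi Le' LPhi'
           Le'K LeK LPhi'K LPhiK).
  - intro n. apply (L_uniq (LG_local L P') (hcomp LPhi Lj) (hcomp Lk Le)).
    intro x; simpl. rewrite HLj, HLPhi, HLe, HLk, square. reflexivity.
  - intro x. apply (L_uniq (LG_local L Q) (hcomp Lq' LPhi) Lq).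
    intro y; simpl. rewrite HLPhi, HLq', HLq, over. reflexivity.
  - exact (Hflat Lk Lq' HLk HLq').
Qed.

End LocalizationFacts.

Arguments L_map {A B phi} L {G G'} f.
Arguments eta_L_equiv {A B phi} L G.
Arguments flat_transfer {A B phi} L {N P Q M P' j q} k q' e Phi.

(* Phi : P -> P' lies over an L-equivalence
   e : N -> M between normal subgroups j(N) of P and k(M) of P', with
   P' = k(M) Phi(P) and Phi^-1(k(M)) = j(N).  Then a map f : P -> T to a local
   group extends along Phi by k m * Phi a |-> fhat m * f a, where fhat is the
   extension of f o j along e. *)
Section NormallyGeneratedComparison.
Variables (A B : Group) (phi : Hom A B).
Variables (N P M P' : Group) (j : Hom N P) (Phi : Hom P P') (k : Hom M P')
          (e : Hom N M).
Hypothesis k_inj : forall m1 m2, k m1 = k m2 -> m1 = m2.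
Hypothesis square : forall n, Phi (j n) = k (e n).
Hypothesis generated : forall z, exists m a, z = gmul (k m) (Phi a).
Hypothesis preimage : forall a m, Phi a = k m -> exists n, a = j n.
Hypothesis normal : forall z m, exists m', gmul (gmul z (k m)) (ginv z) = k m'.
Hypothesis e_equiv : L_equiv phi e.

Lemma conj_restrict (a : P) :
  exists c : Hom M M, forall m, k (c m) = gmul (gmul (Phi a) (k m)) (ginv (Phi a)).
Proof.
  pose (c := fun m => proj1_sig (constructive_indefinite_description _
                                   (normal (Phi a) m))).
  assert (Hc : forall m, gmul (gmul (Phi a) (k m)) (ginv (Phi a)) = k (c m))
    by (intro m; exact (proj2_sig (constructive_indefinite_description _ (normal (Phi a) m)))).
  assert (c_mul : forall x y, c (gmul x y) = gmul (c x) (c y)).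
  { intros x y. apply k_inj. rewrite !hmul, <- !Hc, hmul. apply eq_sym, conj_mul. }
  exists (MkHom _ _ c c_mul). intro m. symmetry. apply Hc.
Qed.

Section Extension.
Variables (T : Group) (HT : is_local phi T) (f : Hom P T) (fhat : Hom M T).
Hypothesis fhat_e : forall n, fhat (e n) = f (j n).

Lemma fhat_conj (a : P) (m m' : M) :
  gmul (gmul (Phi a) (k m)) (ginv (Phi a)) = k m' ->
  fhat m' = gmul (gmul (f a) (fhat m)) (ginv (f a)).
Proof.
  intro Hm. destruct (conj_restrict a) as [c Hc].
  replace m' with (c m) by (apply k_inj; rewrite Hc; exact Hm).
  apply (proj2 (e_equiv _ HT) (hcomp fhat c) (hcomp (conj_hom (f a)) fhat)).
  intro n; simpl.
  assert (Hr : Phi (gmul (gmul a (j n)) (ginv a)) = k (c (e n)))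
    by (rewrite Hc, <- square, !hmul, hom_inv; reflexivity).
  destruct (preimage _ _ Hr) as [n' Hn'].
  replace (c (e n)) with (e n') by (apply k_inj; rewrite <- Hr, <- square, Hn'; reflexivity).
  rewrite !fhat_e, <- Hn', !hmul, hom_inv. reflexivity.
Qed.

Lemma extension_well_defined (m1 m2 : M) (a1 a2 : P) :
  gmul (k m1) (Phi a1) = gmul (k m2) (Phi a2) ->
  gmul (fhat m1) (f a1) = gmul (fhat m2) (f a2).
Proof.
  intro E.
  assert (E' : Phi (gmul a2 (ginv a1)) = k (gmul (ginv m2) m1)).
  { rewrite !hmul, !hom_inv. apply (mul_cancel_l (k m2)), (mul_cancel_r (Phi a1)).
    rassoc. rewrite gmulVl, gmul1r, mulKr. symmetry. exact E. }
  destruct (preimage _ _ E') as [n Hn].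
  assert (He : e n = gmul (ginv m2) m1)
    by (apply k_inj; rewrite <- square, <- Hn; exact E').
  replace m1 with (gmul m2 (e n)) by (rewrite He, mulKr; reflexivity).
  replace a2 with (gmul (j n) a1) by (rewrite <- Hn, mulKr'; reflexivity).
  rewrite !hmul, fhat_e. rassoc. reflexivity.
Qed.

Lemma extend_along_comparison : exists g : Hom P' T, forall a, g (Phi a) = f a.
Proof.
  assert (decomp : forall z, {ma : M * P | z = gmul (k (fst ma)) (Phi (snd ma))}).
  { intro z. apply constructive_indefinite_description.
    destruct (generated z) as [m [a Hz]]. exists (m, a). exact Hz. }
  pose (g := fun z => gmul (fhat (fst (proj1_sig (decomp z))))
                           (f (snd (proj1_sig (decomp z))))).
  assert (g_spec : forall z m a, z = gmul (k m) (Phi a) -> g z = gmul (fhat m) (f a)).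
  { intros z m a Hz. apply extension_well_defined.
    rewrite <- (proj2_sig (decomp z)). exact Hz. }
  assert (g_mul : forall z1 z2, g (gmul z1 z2) = gmul (g z1) (g z2)).
  { intros z1 z2.
    destruct (generated z1) as [m1 [a1 H1]], (generated z2) as [m2 [a2 H2]].
    destruct (normal (Phi a1) m2) as [m' Hm'].
    rewrite (g_spec z1 m1 a1 H1), (g_spec z2 m2 a2 H2),
            (g_spec _ (gmul m1 m') (gmul a1 a2)).
    - rewrite !hmul, (fhat_conj _ _ _ Hm'). rassoc. rewrite mulKl. reflexivity.
    - rewrite H1, H2, !hmul, <- Hm'. rassoc. rewrite mulKl. reflexivity. }
  exists (MkHom _ _ g g_mul). intro a. simpl.
  rewrite (g_spec _ gone a); rewrite hom_one, gmul1l; reflexivity.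
Qed.

End Extension.

Lemma comparison_uniq (T : Group) (HT : is_local phi T) (g1 g2 : Hom P' T) :
  (forall a, g1 (Phi a) = g2 (Phi a)) -> forall z, g1 z = g2 z.
Proof.
  intros Ha z. destruct (generated z) as [m [a ->]]. rewrite !hmul, Ha. f_equal.
  apply (proj2 (e_equiv _ HT) (hcomp g1 k) (hcomp g2 k)).
  intro n; simpl. rewrite <- square. apply Ha.
Qed.

Lemma normally_generated_L_equiv : L_equiv phi Phi.
Proof.
  intros T HT. split.
  - intro f. destruct (proj1 (e_equiv _ HT) (hcomp f j)) as [fhat Hfhat].
    exact (extend_along_comparison T HT f fhat Hfhat).
  - exact (comparison_uniq T HT).
Qed.

End NormallyGeneratedComparison.

Section Comparison.
Variables (A B : Group) (phi : Hom A B) (L : Localization phi).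
Variables (N E Q Q' : Group) (i : Hom N E) (p : Hom E Q) (h : Hom Q' Q)
          (H : ses i p).
Variables (Li : Hom (LG L N) (LG L E)) (Lp : Hom (LG L E) (LG L Q))
          (Lh : Hom (LG L Q') (LG L Q)).
Hypothesis HLi : forall n, Li (eta L N n) = eta L E (i n).
Hypothesis HLp : forall x, Lp (eta L E x) = eta L Q (p x).
Hypothesis HLh : forall y, Lh (eta L Q' y) = eta L Q (h y).
Hypothesis Hs : ses Li Lp.

Let H1 : ses (pb_in Lh Hs) (pb_proj Lp Lh) := pb_ses Lh Hs.
Let k : Hom (LG L N) (pullback (pb_proj Lp Lh) (eta L Q')) :=
  pb_in (eta L Q') H1.

Lemma comparison_compat (x : pullback p h) :
  Lp (eta L E (pb_fst p h x)) = Lh (eta L Q' (pb_proj p h x)).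
Proof. rewrite HLp, HLh. f_equal. exact (proj2_sig x). Qed.

Definition comparison : Hom (pullback p h) (pullback (pb_proj Lp Lh) (eta L Q')) :=
  pb_pair (pb_proj Lp Lh) (eta L Q')
    (pb_pair Lp Lh (hcomp (eta L E) (pb_fst p h)) (hcomp (eta L Q') (pb_proj p h))
       comparison_compat)
    (pb_proj p h) (fun _ => eq_refl).

Lemma comparison_square (n : N) : comparison (pb_in h H n) = k (eta L N n).
Proof.
  apply pb_ext; [apply pb_ext | reflexivity]; simpl.
  - symmetry. apply HLi.
  - apply hom_one.
Qed.

Lemma comparison_generated (z : pullback (pb_proj Lp Lh) (eta L Q')) :
  exists m a, z = gmul (k m) (comparison a).
Proof.
  destruct z as [[[[x y] Hxy] q] Hz]. simpl in Hxy, Hz.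
  destruct (ses_surj H (h q)) as [e He].
  assert (Hx : Lp (gmul x (ginv (eta L E e))) = gone).
  { rewrite hmul, hom_inv, Hxy, Hz, HLh, HLp, He. apply gmulVr. }
  destruct (proj1 (ses_exact Hs _) Hx) as [m Hm].
  exists m, (exist _ (e, q) He : pullback p h).
  apply pb_ext; [apply pb_ext |]; simpl.
  - rewrite Hm, mulKr'. reflexivity.
  - rewrite gmul1l, Hz. reflexivity.
  - rewrite gmul1l. reflexivity.
Qed.

Lemma comparison_preimage (a : pullback p h) (m : LG L N) :
  comparison a = k m -> exists n, a = pb_in h H n.
Proof.
  destruct a as [[e q] He]. intro Ha.
  assert (Hq := f_equal (pb_proj _ _) Ha). simpl in Hq. subst q.
  assert (He' : p e = gone) by (rewrite (He : p e = h gone); apply hom_one).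
  destruct (proj1 (ses_exact H e) He') as [n Hn].
  exists n. apply pb_ext; [exact (eq_sym Hn) | reflexivity].
Qed.

Lemma comparison_L_equiv : L_equiv phi comparison.
Proof.
  apply (normally_generated_L_equiv A B phi _ _ _ _ (pb_in h H) comparison k (eta L N)).
  - exact (ses_inj (pb_ses (eta L Q') H1)).
  - exact comparison_square.
  - exact comparison_generated.
  - exact comparison_preimage.
  - exact (ses_normal (pb_ses (eta L Q') H1)).
  - exact (eta_L_equiv L N).
Qed.

End Comparison.

Arguments comparison {A B phi L E Q Q' p h Lp Lh} HLp HLh.
Arguments comparison_square {A B phi L N E Q Q' i p h} H {Li Lp Lh} HLi HLp HLh Hs n.
Arguments comparison_L_equiv {A B phi L N E Q Q' i p h} H {Li Lp Lh}
  HLi HLp HLh Hs.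

Theorem proposition3p1 (A B : Group) (phi : Hom A B) (L : Localization phi) :
  (forall (G K E : Group) (i : Hom K E) (p : Hom E (LG L G)) (H : ses i p),
      is_local phi K -> is_local phi E ->
      L_flat L (pb_in (eta L G) H) (pb_proj p (eta L G))) ->
  conditionally_flat L.
Proof.
  intros Hyp N E Q i p H Hflat Q' h.
  destruct (L_map L i) as [Li HLi]. destruct (L_map L p) as [Lp HLp].
  destruct (L_map L h) as [Lh HLh].
  pose proof (Hflat Li Lp HLi HLp) as Hs.
  pose (H1 := pb_ses Lh Hs).
  pose proof (pb_local Lp Lh phi (LG_local L E) (LG_local L Q') (LG_local L Q))
    as H1_local.
  (* the hypothesis makes its pullback along eta_Q' flat; transfer via Phi *)
  apply (flat_transfer L (pb_in (eta L Q') H1) (pb_proj _ (eta L Q'))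
           (eta L N) (comparison HLp HLh)).
  - exact (comparison_square H HLi HLp HLh Hs).
  - intro x. reflexivity.
  - exact (eta_L_equiv L N).
  - exact (comparison_L_equiv H HLi HLp HLh Hs).
  - exact (Hyp Q' (LG L N) _ _ _ H1 (LG_local L N) H1_local).
Qed.
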